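(* Let $\mathcal L$ be a lattice in $\mathbb R^2$ and $n\ge2$ an integer. Then there is a convex curve $\mathcal C$ of length $L$ that contains exactly $n$ points of $\mathcal L$, such that, with $$R_1=\min_{P\in\mathcal C}\rho(P),\qquad R_2=\max_{P\in\mathcal C}\rho(P),$$ the inequalities $$\frac{L}{(A_{\mathcal L}R_1)^{1/3}}\le\left(\frac{\tau(\mathcal C)R_2}{A_{\mathcal L}R_1}\right)^{1/3}L^{2/3}\le\frac{\tau(\mathcal C)R_2}{(A_{\mathcal L}R_1)^{1/3}}<n+2$$ hold, where $\tau(\mathcal C)=\int_{\mathcal C}\kappa\,ds$.
   Context: A lattice is a set $\mathcal L=\mathcal L(v_0,v_1,v_2)=\{v_0+mv_1+nv_2: m,n\in\mathbb Z\}$ where $v_0,v_1,v_2\in\mathbb R^2$ and $v_1,v_2$ are linearly independent. Its invariant is $A_{\mathcal L}=|\det(v_1,v_2)|$. All curves are of class $C^2$ with nonvanishing first and second derivative vectors, oriented so that the curvature $\kappa$ is positive; a convex curve is such a curve. The radius of curvature is $\rho=1/\kappa$, $s$ is arclength, and $\tau(\mathcal C)=\int_{\mathcal C}\kappa\,ds$ is the total curvature. *)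

From Stdlib Require Import Reals Lra List ZArith.
From Coquelicot Require Import Coquelicot.
Open Scope R_scope.

Definition pt := (R * R)%type.

Definition in_lattice (v0 v1 v2 : pt) (p : pt) : Prop :=
  exists m k : Z,
    fst p = fst v0 + IZR m * fst v1 + IZR k * fst v2 /\
    snd p = snd v0 + IZR m * snd v1 + IZR k * snd v2.

Definition det2 (u v : pt) : R := fst u * snd v - snd u * fst v.

Definition lin_indep (v1 v2 : pt) : Prop := det2 v1 v2 <> 0.

Definition lattice_inv (v1 v2 : pt) : R := Rabs (det2 v1 v2).

Definition d1 (f : R -> R) : R -> R := Derive f.
Definition d2 (f : R -> R) : R -> R := Derive (Derive f).

Definition convex_curve (a b : R) (x y : R -> R) : Prop :=
  a < b /\
  (forall t, ex_derive x t /\ ex_derive y t /\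
             ex_derive (Derive x) t /\ ex_derive (Derive y) t /\
             continuous (d2 x) t /\ continuous (d2 y) t) /\
  (forall t, a <= t <= b ->
     (d1 x t <> 0 \/ d1 y t <> 0) /\
     (d2 x t <> 0 \/ d2 y t <> 0) /\
     d1 x t * d2 y t - d1 y t * d2 x t > 0).

Definition speed (x y : R -> R) (t : R) : R :=
  sqrt (d1 x t ^ 2 + d1 y t ^ 2).

Definition curvature (x y : R -> R) (t : R) : R :=
  (d1 x t * d2 y t - d1 y t * d2 x t) / (speed x y t ^ 3).

Definition radius (x y : R -> R) (t : R) : R := / curvature x y t.

Definition curve_length (a b : R) (x y : R -> R) : R :=
  RInt (speed x y) a b.

Definition total_curvature (a b : R) (x y : R -> R) : R :=
  RInt (fun t => curvature x y t * speed x y t) a b.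

Definition on_curve (a b : R) (x y : R -> R) (p : pt) : Prop :=
  exists t, a <= t <= b /\ p = (x t, y t).

Definition lattice_count (v0 v1 v2 : pt) (a b : R) (x y : R -> R) (n : nat)
  : Prop :=
  exists l : list pt, NoDup l /\ length l = n /\
    forall p, In p l <-> (on_curve a b x y p /\ in_lattice v0 v1 v2 p).

Definition is_min_radius (a b : R) (x y : R -> R) (R1 : R) : Prop :=
  (exists t, a <= t <= b /\ radius x y t = R1) /\
  (forall t, a <= t <= b -> R1 <= radius x y t).

Definition is_max_radius (a b : R) (x y : R -> R) (R2 : R) : Prop :=
  (exists t, a <= t <= b /\ radius x y t = R2) /\
  (forall t, a <= t <= b -> radius x y t <= R2).

Definition cbrt (z : R) : R := Rpower z (1/3).

From Stdlib Require Import Reals Lra Lia List ZArith FunctionalExtensionality FinFun.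
From Coquelicot Require Import Coquelicot.
Open Scope R_scope.

(* The curve is the parabolic arc g(t) = v0 + t e + (M t + t (t - 1) / 2) w,
   0 <= t <= n - 1, with e = +-v1 and w = v2 oriented so that det(e, w) = A.
   Since det(g(t) - v0, w) = t A, its lattice points are exactly g(0), ..., g(n - 1).
   As g'' = w, the cross product g' x g'' is the constant A, so that
   kappa ds = A dt / |g'|^2 and rho = |g'|^3 / A; the first two inequalities then
   only need L <= tau R2.  Taking the integer M large moves the arc far out along
   the parabola, where |g'| varies by a factor at most 1 + 1/n on [0, n - 1];
   hence tau R2 / (A R1)^(1/3) <= (n - 1) (1 + 1/n)^3 < n + 2. *)

Lemma cbrt_cube (z : R) : 0 < z -> cbrt (z ^ 3) = z.
Proof.
intros Hz. unfold cbrt. rewrite <- (Rpower_pow 3 z Hz), Rpower_mult.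
replace (INR 3 * (1 / 3)) with 1 by (simpl; field).
apply Rpower_1; exact Hz.
Qed.

Lemma exp_le_exp (u v : R) : u <= v -> exp u <= exp v.
Proof.
intros [Huv | ->]; [left; apply exp_increasing; exact Huv | right; reflexivity].
Qed.

Lemma cbrt_interpolation (L T P : R) : 0 < L -> L <= T -> 0 < P ->
  L / cbrt P <= cbrt (T / P) * Rpower L (2 / 3) /\
  cbrt (T / P) * Rpower L (2 / 3) <= T / cbrt P.
Proof.
intros HL HLT HP. assert (HT : 0 < T) by lra.
assert (Hln : ln L <= ln T) by (apply ln_le; assumption).
unfold cbrt, Rpower. rewrite ln_div by assumption.
destruct (ln_exists L HL) as [l ->]. destruct (ln_exists T HT) as [t ->].
rewrite !ln_exp in *. unfold Rdiv. rewrite <- !exp_Ropp, <- !exp_plus.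
split; apply exp_le_exp; lra.
Qed.

Lemma continuous_speed (x y : R -> R) (t : R) :
  ex_derive (Derive x) t -> ex_derive (Derive y) t -> continuous (speed x y) t.
Proof.
intros Hx Hy. unfold speed, d1.
apply (continuous_comp (fun t => Derive x t ^ 2 + Derive y t ^ 2) sqrt).
- apply (@ex_derive_continuous R_AbsRing R_NormedModule).
  apply (ex_derive_plus (fun t => Derive x t ^ 2) (fun t => Derive y t ^ 2));
    apply ex_derive_pow; assumption.
- apply continuity_pt_filterlim, continuity_pt_sqrt. nra.
Qed.

Section ConstantCross.

Variables (l A : R) (x y : R -> R).
Hypothesis convex : convex_curve 0 l x y.
Hypothesis cross_const :
  forall t, 0 <= t <= l -> d1 x t * d2 y t - d1 y t * d2 x t = A.

Lemma speed_gt0 (t : R) : 0 <= t <= l -> 0 < speed x y t.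
Proof.
intros Ht. destruct convex as [_ [_ Hreg]].
destruct (Hreg t Ht) as [Hd1 _]. unfold speed. apply sqrt_lt_R0.
destruct Hd1 as [Hd1 | Hd1]; apply pow2_gt_0 in Hd1; nra.
Qed.

Lemma cross_gt0 : 0 < A.
Proof.
destruct convex as [Hl [_ Hreg]].
rewrite <- (cross_const 0) by lra. apply (Hreg 0). lra.
Qed.

Lemma curvature_mul_speed (t : R) : 0 <= t <= l ->
  curvature x y t * speed x y t = A / speed x y t ^ 2.
Proof.
intros Ht. pose proof (speed_gt0 t Ht).
unfold curvature. rewrite cross_const by exact Ht. field. lra.
Qed.

Lemma radius_eq (t : R) : 0 <= t <= l -> radius x y t = speed x y t ^ 3 / A.
Proof.
intros Ht. pose proof (speed_gt0 t Ht). pose proof cross_gt0.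
unfold radius, curvature. rewrite cross_const by exact Ht. field. lra.
Qed.

Lemma total_curvature_eq :
  total_curvature 0 l x y = RInt (fun t => A / speed x y t ^ 2) 0 l.
Proof.
destruct convex as [Hl _]. unfold total_curvature. apply RInt_ext.
rewrite Rmin_left, Rmax_right by lra. intros t Ht.
apply curvature_mul_speed. lra.
Qed.

Lemma ex_RInt_speed : ex_RInt (speed x y) 0 l.
Proof.
destruct convex as [_ [Hder _]].
apply (@ex_RInt_continuous R_CompleteNormedModule). intros t _.
apply continuous_speed; apply Hder.
Qed.

Lemma ex_RInt_cross_div_speed2 : ex_RInt (fun t => A / speed x y t ^ 2) 0 l.
Proof.
destruct convex as [Hl [Hder _]].
apply (@ex_RInt_continuous R_CompleteNormedModule).
rewrite Rmin_left, Rmax_right by lra. intros t Ht.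
pose proof (speed_gt0 t Ht).
apply (continuous_mult (fun _ => A) (fun t => / speed x y t ^ 2)).
- apply continuous_const.
- apply continuous_Rinv_comp; [|nra].
  apply (continuous_comp (speed x y) (fun u => u ^ 2)).
  + apply continuous_speed; apply Hder.
  + apply (@ex_derive_continuous R_AbsRing R_NormedModule). auto_derive. trivial.
Qed.

Lemma curve_length_le_total_curvature_mul (R2 : R) :
  is_max_radius 0 l x y R2 -> curve_length 0 l x y <= total_curvature 0 l x y * R2.
Proof.
intros [_ Hmax]. destruct convex as [Hl _]. pose proof cross_gt0.
rewrite total_curvature_eq, Rmult_comm.
rewrite <- (RInt_scal (V := R_CompleteNormedModule)) by exact ex_RInt_cross_div_speed2.
apply RInt_le; [lra | exact ex_RInt_speed | |].
- apply (ex_RInt_scal (fun t => A / speed x y t ^ 2)). exact ex_RInt_cross_div_speed2.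
- intros t Ht. assert (Ht' : 0 <= t <= l) by lra.
  pose proof (speed_gt0 t Ht'). specialize (Hmax t Ht'). rewrite radius_eq in Hmax by exact Ht'.
  change (scal R2 (A / speed x y t ^ 2)) with (R2 * (A / speed x y t ^ 2)).
  replace (speed x y t) with (speed x y t ^ 3 / A * (A / speed x y t ^ 2)) at 1 by (field; lra).
  apply Rmult_le_compat_r; [|exact Hmax].
  apply Rlt_le, Rdiv_lt_0_compat; nra.
Qed.

Variables (p k : R).
Hypothesis p_gt0 : 0 < p.
Hypothesis speed_bounds : forall t, 0 <= t <= l -> p <= speed x y t <= k * p.

Lemma total_curvature_le : total_curvature 0 l x y <= l * (A / p ^ 2).
Proof.
destruct convex as [Hl _]. pose proof cross_gt0.
rewrite total_curvature_eq.
replace (l * (A / p ^ 2)) with (RInt (fun _ => A / p ^ 2) 0 l)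
  by (rewrite RInt_const; unfold scal; simpl; unfold mult; simpl; ring).
apply RInt_le; [lra | exact ex_RInt_cross_div_speed2 | apply ex_RInt_const |].
intros t Ht. destruct (speed_bounds t) as [Hp _]; [lra|].
apply Rmult_le_compat_l; [lra|]. apply Rinv_le_contravar; [nra|]. apply pow_incr. lra.
Qed.

Lemma curve_length_gt0 : 0 < curve_length 0 l x y.
Proof.
destruct convex as [Hl _].
apply Rlt_le_trans with (RInt (fun _ => p) 0 l).
- rewrite RInt_const. unfold scal; simpl; unfold mult; simpl. nra.
- apply RInt_le; [lra | apply ex_RInt_const | exact ex_RInt_speed |].
  intros t Ht. apply speed_bounds. lra.
Qed.

Lemma total_curvature_mul_max_radius_le (R1 R2 : R) :
  is_min_radius 0 l x y R1 -> is_max_radius 0 l x y R2 ->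
  total_curvature 0 l x y * R2 / cbrt (A * R1) <= l * k ^ 3.
Proof.
intros [[t1 [Ht1 <-]] _] HR2.
pose proof (curve_length_le_total_curvature_mul R2 HR2) as HLtau.
pose proof curve_length_gt0. pose proof total_curvature_le. pose proof cross_gt0.
destruct HR2 as [[t2 [Ht2 <-]] _].
rewrite !radius_eq in * by assumption.
destruct (speed_bounds t1 Ht1) as [Hp1 _]. destruct (speed_bounds t2 Ht2) as [Hp2 Hk2].
replace (A * (speed x y t1 ^ 3 / A)) with (speed x y t1 ^ 3) by (field; lra).
rewrite cbrt_cube by lra.
set (tau := total_curvature 0 l x y) in *. set (s2 := speed x y t2) in *.
assert (Hs2 : s2 ^ 3 <= (k * p) ^ 3) by (apply pow_incr; lra).
assert (Hrad2 : 0 < s2 ^ 3 / A) by (apply Rdiv_lt_0_compat; [apply pow_lt|]; lra).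
assert (Htau : 0 < tau) by nra.
apply Rle_trans with (tau * (s2 ^ 3 / A) / p).
- apply Rmult_le_compat_l; [lra | apply Rinv_le_contravar; lra].
- apply Rle_trans with (l * (A / p ^ 2) * ((k * p) ^ 3 / A) / p).
  + unfold Rdiv at 1 3. apply Rmult_le_compat_r; [apply Rlt_le, Rinv_0_lt_compat; lra|].
    apply Rmult_le_compat; try lra.
    unfold Rdiv. apply Rmult_le_compat_r; [apply Rlt_le, Rinv_0_lt_compat|]; lra.
  + right. field. lra.
Qed.

Lemma constant_cross_estimates (R1 R2 : R) :
  is_min_radius 0 l x y R1 -> is_max_radius 0 l x y R2 ->
  let L := curve_length 0 l x y in
  let tau := total_curvature 0 l x y in
  L / cbrt (A * R1) <= cbrt (tau * R2 / (A * R1)) * Rpower L (2 / 3) /\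
  cbrt (tau * R2 / (A * R1)) * Rpower L (2 / 3) <= tau * R2 / cbrt (A * R1) /\
  tau * R2 / cbrt (A * R1) <= l * k ^ 3.
Proof.
intros HR1 HR2 L tau.
assert (HAR1 : 0 < A * R1).
{ destruct HR1 as [[t1 [Ht1 <-]] _]. rewrite radius_eq by exact Ht1.
  pose proof (speed_gt0 t1 Ht1). pose proof cross_gt0.
  field_simplify; [apply pow_lt|]; lra. }
destruct (cbrt_interpolation L (tau * R2) (A * R1) curve_length_gt0
  (curve_length_le_total_curvature_mul R2 HR2) HAR1) as [Hlow Hhigh].
split; [exact Hlow | split; [exact Hhigh |]].
apply total_curvature_mul_max_radius_le; assumption.
Qed.

End ConstantCross.

Definition parabola (c e w M t : R) : R := c + t * e + (M * t + t * (t - 1) / 2) * w.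

Lemma Derive_parabola (c e w M : R) :
  Derive (parabola c e w M) = fun t => e + (M + t - 1 / 2) * w.
Proof.
apply functional_extensionality. intros t. apply is_derive_unique.
unfold parabola. auto_derive; [trivial | field].
Qed.

Lemma Derive_tangent (e w M : R) : Derive (fun t => e + (M + t - 1 / 2) * w) = fun _ => w.
Proof.
apply functional_extensionality. intros t. apply is_derive_unique.
auto_derive; [trivial | ring].
Qed.

Lemma shift_growth_le (a b q N t : R) :
  0 < a -> b ^ 2 <= q * a -> 1 <= N -> 3 * N ^ 2 * a <= b -> 0 <= t <= N ->
  N * (2 * t * b + t ^ 2 * a) <= q.
Proof.
intros Ha Hcs HN Hb Ht.
assert (Hb0 : 0 <= b) by nra.
assert (Hbt : 0 <= N * b * (N - t)) by (apply Rmult_le_pos; [apply Rmult_le_pos|]; lra).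
assert (Hat : 0 <= N * a * (N ^ 2 - t ^ 2)) by (apply Rmult_le_pos; [apply Rmult_le_pos|]; nra).
assert (Hbb : 3 * N ^ 2 * a * b <= b ^ 2) by nra.
assert (Haa : N ^ 3 * a ^ 2 <= N ^ 2 * a * b).
{ apply Rle_trans with (N ^ 2 * a * (3 * N ^ 2 * a)); [|apply Rmult_le_compat_l; nra].
  assert (0 <= N ^ 3 * a ^ 2 * (3 * N - 1)) by (apply Rmult_le_pos; [apply Rmult_le_pos|]; nra).
  nra. }
apply Rle_trans with (2 * N ^ 2 * b + N ^ 3 * a); [nra|].
apply (Rmult_le_reg_l a); nra.
Qed.

Lemma sq_norm_shift_bounds (ux uy wx wy N t : R) :
  0 < wx ^ 2 + wy ^ 2 -> 1 <= N ->
  3 * N ^ 2 * (wx ^ 2 + wy ^ 2) <= ux * wx + uy * wy -> 0 <= t <= N ->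
  ux ^ 2 + uy ^ 2 <= (ux + t * wx) ^ 2 + (uy + t * wy) ^ 2
                 <= (1 + 1 / N) * (ux ^ 2 + uy ^ 2).
Proof.
intros Ha HN Hdot Ht.
replace ((ux + t * wx) ^ 2 + (uy + t * wy) ^ 2)
  with (ux ^ 2 + uy ^ 2 + 2 * t * (ux * wx + uy * wy) + t ^ 2 * (wx ^ 2 + wy ^ 2)) by ring.
assert (Hcs : (ux * wx + uy * wy) ^ 2 <= (ux ^ 2 + uy ^ 2) * (wx ^ 2 + wy ^ 2))
  by (pose proof (pow2_ge_0 (ux * wy - uy * wx)); nra).
pose proof (shift_growth_le _ _ _ N t Ha Hcs HN Hdot Ht) as Hgrowth.
set (a := wx ^ 2 + wy ^ 2) in *. set (b := ux * wx + uy * wy) in *.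
set (q := ux ^ 2 + uy ^ 2) in *.
assert (0 <= t * b) by (apply Rmult_le_pos; nra).
split; [nra|].
replace ((1 + 1 / N) * q) with (q + q / N) by (field; lra).
enough (2 * t * b + t ^ 2 * a <= q / N) by lra.
apply (Rmult_le_reg_l N); [lra|]. replace (N * (q / N)) with q by (field; lra). exact Hgrowth.
Qed.

Section ParabolaArc.

Variables (cx cy ex ey wx wy M : R).
Let x := parabola cx ex wx M.
Let y := parabola cy ey wy M.

Lemma parabola_cross (t : R) : d1 x t * d2 y t - d1 y t * d2 x t = ex * wy - ey * wx.
Proof.
unfold d1, d2, x, y. rewrite !Derive_parabola, !Derive_tangent. ring.
Qed.

Lemma parabola_convex (a b : R) : a < b -> 0 < ex * wy - ey * wx -> convex_curve a b x y.
Proof.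
intros Hab Hdet. split; [exact Hab | split].
- intros t. unfold d2, x, y. rewrite !Derive_parabola, !Derive_tangent.
  repeat split; try apply continuous_const; unfold parabola; auto_derive; trivial.
- intros t _. rewrite parabola_cross. split; [|split; [|lra]].
  + unfold d1, x, y. rewrite !Derive_parabola.
    destruct (Req_dec (ex + (M + t - 1 / 2) * wx) 0) as [Hx | Hx]; [right | left; exact Hx].
    intros Hy. apply Rlt_not_eq in Hdet. apply Hdet.
    replace ex with (- ((M + t - 1 / 2) * wx)) by lra.
    replace ey with (- ((M + t - 1 / 2) * wy)) by lra. ring.
  + unfold d2, x, y. rewrite !Derive_parabola, !Derive_tangent.
    destruct (Req_dec wx 0) as [Hw | Hw]; [right | left; exact Hw].
    intros Hw'. rewrite Hw, Hw' in Hdet. lra.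
Qed.

Lemma parabola_speed_bounds (N : R) :
  0 < wx ^ 2 + wy ^ 2 -> 1 <= N ->
  3 * N ^ 2 * (wx ^ 2 + wy ^ 2)
    <= (ex + (M - 1 / 2) * wx) * wx + (ey + (M - 1 / 2) * wy) * wy ->
  forall t, 0 <= t <= N - 1 ->
    speed x y 0 <= speed x y t <= (1 + 1 / N) * speed x y 0.
Proof.
intros Hw HN Hdot t Ht. unfold speed, d1, x, y. rewrite !Derive_parabola.
replace (M + 0 - 1 / 2) with (M - 1 / 2) by ring.
replace (ex + (M + t - 1 / 2) * wx) with ((ex + (M - 1 / 2) * wx) + t * wx) by ring.
replace (ey + (M + t - 1 / 2) * wy) with ((ey + (M - 1 / 2) * wy) + t * wy) by ring.
set (ux := ex + (M - 1 / 2) * wx) in *. set (uy := ey + (M - 1 / 2) * wy) in *.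
destruct (sq_norm_shift_bounds ux uy wx wy N t Hw HN Hdot) as [Hlow Hhigh]; [lra|].
set (c := 1 + 1 / N) in *.
assert (Hc : 1 <= c) by (assert (0 < 1 / N) by (apply Rdiv_lt_0_compat; lra); unfold c; lra).
assert (Hq : 0 <= ux ^ 2 + uy ^ 2) by nra.
split; [apply sqrt_le_1_alt; exact Hlow|].
apply Rle_trans with (sqrt (c ^ 2 * (ux ^ 2 + uy ^ 2))).
- apply sqrt_le_1_alt. nra.
- rewrite sqrt_mult_alt, sqrt_pow2 by nra. lra.
Qed.

End ParabolaArc.

Lemma exists_parabola_shift (ex ey wx wy K : R) :
  0 < wx ^ 2 + wy ^ 2 ->
  exists M : Z,
    K * (wx ^ 2 + wy ^ 2)
      <= (ex + (IZR M - 1 / 2) * wx) * wx + (ey + (IZR M - 1 / 2) * wy) * wy.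
Proof.
intros Ha. set (a := wx ^ 2 + wy ^ 2) in *. set (b := ex * wx + ey * wy).
set (X := K + 1 / 2 - b / a).
destruct (archimed X) as [HM _]. exists (up X).
replace ((ex + (IZR (up X) - 1 / 2) * wx) * wx + (ey + (IZR (up X) - 1 / 2) * wy) * wy)
  with (K * a + (IZR (up X) - X) * a) by (unfold X, a, b in *; field; lra).
assert (0 < (IZR (up X) - X) * a) by (apply Rmult_lt_0_compat; lra).
lra.
Qed.

Lemma exists_sign_mul_eq_Rabs (r : R) : exists s : Z, (s * s = 1)%Z /\ IZR s * r = Rabs r.
Proof.
destruct (Rle_dec 0 r) as [Hr | Hr].
- exists 1%Z. split; [reflexivity|]. rewrite Rabs_pos_eq by exact Hr. ring.
- exists (-1)%Z. split; [reflexivity|]. rewrite Rabs_left by lra. ring.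
Qed.

Lemma triangular_nat_int (k : nat) : exists h : Z, IZR h = INR k * (INR k - 1) / 2.
Proof.
induction k as [|k [h Hh]].
- exists 0%Z. simpl. field.
- exists (h + Z.of_nat k)%Z. rewrite plus_IZR, <- INR_IZR_INZ, Hh, S_INR. field.
Qed.

Section LatticeParabola.

Variables (v0 v1 v2 : pt) (s M : Z).
Hypothesis s_unit : (s * s = 1)%Z.
Hypothesis indep : lin_indep v1 v2.
Let x := parabola (fst v0) (IZR s * fst v1) (fst v2) (IZR M).
Let y := parabola (snd v0) (IZR s * snd v1) (snd v2) (IZR M).

Lemma parabola_nat_in_lattice (k : nat) : in_lattice v0 v1 v2 (x (INR k), y (INR k)).
Proof.
destruct (triangular_nat_int k) as [h Hh].
exists (s * Z.of_nat k)%Z, (M * Z.of_nat k + h)%Z. simpl.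
rewrite plus_IZR, !mult_IZR, <- INR_IZR_INZ, Hh.
unfold x, y, parabola. split; ring.
Qed.

Lemma parabola_cross_v2 (t : R) :
  (x t - fst v0) * snd v2 - (y t - snd v0) * fst v2 = t * IZR s * det2 v1 v2.
Proof. unfold x, y, parabola, det2. ring. Qed.

Lemma parabola_in_lattice_int (t : R) :
  in_lattice v0 v1 v2 (x t, y t) -> exists z : Z, t = IZR z.
Proof.
intros [m [k [Hx Hy]]]. simpl in Hx, Hy. exists (m * s)%Z.
assert (Hs : IZR s * IZR s = 1) by (rewrite <- mult_IZR, s_unit; reflexivity).
assert (Htm : t * IZR s * det2 v1 v2 = IZR m * det2 v1 v2)
  by (rewrite <- parabola_cross_v2, Hx, Hy; unfold det2; ring).
apply Rmult_eq_reg_r in Htm; [|exact indep].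
rewrite mult_IZR, <- Htm. replace t with (t * (IZR s * IZR s)) at 1 by (rewrite Hs; ring).
ring.
Qed.

Lemma parabola_nat_injective (i j : nat) :
  (x (INR i), y (INR i)) = (x (INR j), y (INR j)) -> i = j.
Proof.
intros Hij. injection Hij as Hx Hy.
assert (Hs : IZR s <> 0)
  by (intros H0; apply eq_IZR in H0; rewrite H0 in s_unit; discriminate).
assert (Hc : INR i * IZR s * det2 v1 v2 = INR j * IZR s * det2 v1 v2)
  by (rewrite <- !parabola_cross_v2, Hx, Hy; reflexivity).
apply INR_eq. apply Rmult_eq_reg_r in Hc; [|exact indep].
apply Rmult_eq_reg_r in Hc; [exact Hc | exact Hs].
Qed.

Lemma parabola_lattice_count (n : nat) : lattice_count v0 v1 v2 0 (INR n - 1) x y n.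
Proof.
exists (map (fun k => (x (INR k), y (INR k))) (seq 0 n)). split; [|split].
- apply Injective_map_NoDup; [exact parabola_nat_injective | apply seq_NoDup].
- rewrite length_map, length_seq. reflexivity.
- intros p. rewrite in_map_iff. split.
  + intros [k [<- Hk]]. apply in_seq in Hk.
    split; [|apply parabola_nat_in_lattice].
    exists (INR k). split; [|reflexivity]. split; [apply pos_INR|].
    assert (Hkn : INR (S k) <= INR n) by (apply le_INR; lia).
    rewrite S_INR in Hkn. lra.
  + intros [[t [Ht ->]] Hlat]. destruct (parabola_in_lattice_int t Hlat) as [z ->].
    rewrite INR_IZR_INZ in Ht. destruct Ht as [Hz0 Hzn].
    apply le_IZR in Hz0.
    assert (Hzn' : (z < Z.of_nat n)%Z) by (apply lt_IZR; lra).
    exists (Z.to_nat z). rewrite INR_IZR_INZ, Z2Nat.id by exact Hz0.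
    split; [reflexivity | apply in_seq; lia].
Qed.

End LatticeParabola.

Lemma lin_indep_sq_norm_r_gt0 (v1 v2 : pt) : lin_indep v1 v2 -> 0 < fst v2 ^ 2 + snd v2 ^ 2.
Proof.
intros indep. unfold lin_indep, det2 in indep.
destruct (Req_dec (fst v2) 0) as [Hx | Hx]; [destruct (Req_dec (snd v2) 0) as [Hy | Hy]|].
- exfalso. apply indep. rewrite Hx, Hy. ring.
- apply pow2_gt_0 in Hy. nra.
- apply pow2_gt_0 in Hx. nra.
Qed.

Lemma pred_mul_cube_lt (N : R) : 0 < N -> (N - 1) * (1 + 1 / N) ^ 3 < N + 2.
Proof.
intros HN. replace ((N - 1) * (1 + 1 / N) ^ 3) with ((N - 1) * (N + 1) ^ 3 / N ^ 3) by (field; lra).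
apply (Rmult_lt_reg_r (N ^ 3)); [apply pow_lt; exact HN|].
unfold Rdiv. rewrite Rmult_assoc, Rinv_l, Rmult_1_r by (apply pow_nonzero; lra).
assert (E : (N + 2) * N ^ 3 - (N - 1) * (N + 1) ^ 3 = 2 * N + 1) by ring.
lra.
Qed.

Theorem theorem8p1 (v0 v1 v2 : pt) (n : nat) :
  lin_indep v1 v2 -> (2 <= n)%nat ->
  exists (a b : R) (x y : R -> R),
    convex_curve a b x y /\
    lattice_count v0 v1 v2 a b x y n /\
    forall R1 R2 : R,
      is_min_radius a b x y R1 -> is_max_radius a b x y R2 ->
      let A := lattice_inv v1 v2 in
      let L := curve_length a b x y in
      let tau := total_curvature a b x y in
      L / cbrt (A * R1)
        <= cbrt (tau * R2 / (A * R1)) * Rpower L (2/3) /\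
      cbrt (tau * R2 / (A * R1)) * Rpower L (2/3)
        <= tau * R2 / cbrt (A * R1) /\
      tau * R2 / cbrt (A * R1) < INR n + 2.
Proof.
intros indep Hn.
assert (HN : 2 <= INR n) by (apply (le_INR 2) in Hn; simpl in Hn; lra).
destruct (exists_sign_mul_eq_Rabs (det2 v1 v2)) as [s [Hs Hsdet]].
assert (Hcross : IZR s * fst v1 * snd v2 - IZR s * snd v1 * fst v2 = lattice_inv v1 v2)
  by (unfold lattice_inv; rewrite <- Hsdet; unfold det2; ring).
assert (HA : 0 < lattice_inv v1 v2) by (apply Rabs_pos_lt; exact indep).
pose proof (lin_indep_sq_norm_r_gt0 v1 v2 indep) as Hw.
destruct (exists_parabola_shift (IZR s * fst v1) (IZR s * snd v1) (fst v2) (snd v2)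
            (3 * INR n ^ 2) Hw) as [M HM].
set (x := parabola (fst v0) (IZR s * fst v1) (fst v2) (IZR M)).
set (y := parabola (snd v0) (IZR s * snd v1) (snd v2) (IZR M)).
assert (Hconvex : convex_curve 0 (INR n - 1) x y) by (apply parabola_convex; lra).
exists 0, (INR n - 1), x, y.
split; [exact Hconvex | split; [apply parabola_lattice_count; assumption |]].
intros R1 R2 HR1 HR2.
assert (Hp : 0 < speed x y 0) by (apply (speed_gt0 (INR n - 1)); [exact Hconvex | lra]).
pose proof (constant_cross_estimates (INR n - 1) (lattice_inv v1 v2) x y Hconvex
  (fun t _ => eq_trans (parabola_cross _ _ _ _ _ _ _ t) Hcross) (speed x y 0) (1 + 1 / INR n) Hp
  (parabola_speed_bounds _ _ _ _ _ _ _ (INR n) Hw ltac:(lra) HM) R1 R2 HR1 HR2) as Hest.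
cbv zeta in Hest |- *. destruct Hest as [Hlow [Hmid Hhigh]].
split; [exact Hlow | split; [exact Hmid |]].
apply Rle_lt_trans with (1 := Hhigh). apply pred_mul_cube_lt. lra.
Qed.
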